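(* Let $\mathcal G$ be a connected rank-3 tensor Feynman graph with the data described in the context. Then \[ F_{\rm int}(\mathcal G)=-\big(\omega(\mathcal G_{\rm col})-g_{\partial\mathcal G}\big)+3V_++2V_m-N_{\rm ext}-(C_\partial-1)+2 . \]
   Context: Bubbles. Use colors $1,2,3$ for bubble edges and color $0$ for propagator lines. The tetrahedral bubble $\mathbf b_+$ is $K_4$ on $w_1,\dots,w_4$ with the following colored edges: \begin{itemize} \item $w_1w_2$ and $w_3w_4$ of color 1; \item $w_1w_3$ and $w_2w_4$ of color 2; \item $w_1w_4$ and $w_2w_3$ of color 3. \end{itemize} For $c\in\{1,2,3\}$, the melonic bubble $\mathbf b_c$ has vertices $w_1,\dots,w_4$ and the following edges: \begin{itemize} \item $w_1w_2$ doubled, carrying the two colors of $\{1,2,3\}\setminus\{c\}$; \item $w_3w_4$ doubled, carrying the two colors of $\{1,2,3\}\setminus\{c\}$; \item single edges $w_2w_3$ and $w_4w_1$ of color $c$. \end{itemize} Graphs. A graph $\mathcal G$ consists of the following data: \begin{itemize} \item $V=V_++V_m$ interaction vertices, each a copy of $\mathbf b_+$ ($V_+$ of them) or of some $\mathbf b_c$ ($V_m$ of them); \item $L$ internal lines of color 0, each joining two of the $4V$ bubble vertices, with each bubble vertex incident to at most one line; \item a color-0 external leg attached to each bubble vertex not incident to a line. \end{itemize} Let $N_{\rm ext}$ be the number of external legs, so $4V=2L+N_{\rm ext}$. The colored extension $\mathcal G_{\rm col}$ is the resulting 4-edge-colored graph, with $4V$ vertices, $L+6V$ edges and $N_{\rm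 ext}$ half-edges. Connected means $\mathcal G_{\rm col}$ is connected. Faces. For $c\in\{1,2,3\}$, a face of color $c$ is a connected component of the subgraph of $\mathcal G_{\rm col}$ formed by the color-0 edges and half-edges and the color-$c$ edges. It is internal if it is a cycle, and external if it is a path joining two external legs. $F_{\rm int}(\mathcal G)$ is the total number of internal faces. Boundary graph. The boundary graph $\partial\mathcal G$ is defined as follows: \begin{itemize} \item its vertices are the external legs; \item each external face of color $c$ gives an edge of color $c$ joining its two end legs. \end{itemize} $C_\partial$ is its number of connected components. $F_\partial$ is its number of bicolored cycles (cycles using exactly the edges of two colors $\{a,b\}\subset\{1,2,3\}$). Its genus $g_{\partial\mathcal G}$ is defined by \[ 2C_\partial-2g_{\partial\mathcal G}=N_{\rm ext}-\tfrac32N_{\rm ext}+F_\partial . \] Pinched jackets. The three jackets correspond to the three cyclic orders $(0,a,b,c)$ of the colors $0,1,2,3$ up to reversal; equivalently, to the choice of the unordered pair $\{a,c\}\subset\{1,2,3\}$ of colors adjacent to $0$. For such a jacket $J$, let $F_{\tilde J}$ be the sum of: \begin{itemize} \item the number of cycles of $\mathcal G_{\rm col}$ bicolored in one of the pairs $\{0,a\},\{a,b\},\{b,c\},\{c,0\}$; \item the number of bicolored cycles of $\partial\mathcal G$ with colors $\{a,c\}$. \end{itemize} The genus of the pinched jacket $\tilde J$ is defined by \[ 2-2g_{\tilde J}=4V-(L+6V)+F_{\tilde J}. \] Finally, $\omega(\mathcal G_{\rm col})=\sum_{J}g_{\tilde J}$ is the sum over the three pinched jackets. *)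

From mathcomp Require Import all_boot all_order all_algebra.
Set Implicit Arguments. Unset Strict Implicit. Unset Printing Implicit Defensive.
Import Order.TTheory GRing.Theory Num.Theory.

(* Conventions:
   - bubble colors 1,2,3 are represented by c : 'I_3 (c = color c+1);
   - bubble vertices w1..w4 are represented by k : 'I_4 (k = w_(k+1));
   - the type of a bubble is  None  (tetrahedral b_+) or  Some c  (melonic b_(c+1));
   - bubble vertices of the graph are pairs (i, k) : 'I_V * 'I_4 (vertex w_(k+1)
     of the i-th interaction bubble);
   - the color-0 lines are encoded by an involution m : the vertex x is joined
     by a line to m x when m x != x, and carries an external leg when m x = x. *)

Definition bvert (V : nat) := ('I_V * 'I_4)%type.

(* colored edges of a bubble, listed as in the paper (one orientation each) *)
Definition bubble_edges (b : option 'I_3) (c : 'I_3) : seq (nat * nat) :=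
  match b with
  | None =>
      match val c with
      | 0 => [:: (0, 1); (2, 3)]
      | 1 => [:: (0, 2); (1, 3)]
      | _ => [:: (0, 3); (1, 2)]
      end
  | Some c' =>
      if c == c' then [:: (1, 2); (3, 0)]
      else [:: (0, 1); (2, 3)]             (* other colors: w1w2, w3w4 (doubled) *)
  end.

Definition bubble_edge (b : option 'I_3) (c : 'I_3) (k l : 'I_4) : bool :=
  ((val k, val l) \in bubble_edges b c) || ((val l, val k) \in bubble_edges b c).

Section Graph.
Variables (V : nat) (kind : 'I_V -> option 'I_3) (m : bvert V -> bvert V).

Definition gedge (c : 'I_3) : rel (bvert V) :=
  fun x y => (x.1 == y.1) && bubble_edge (kind x.1) c x.2 y.2.

Definition line : rel (bvert V) := fun x y => (m x == y) && (x != y).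

Definition legs : {set bvert V} := [set x | m x == x].

Definition V_plus : nat := #|[set i : 'I_V | kind i == None]|.
Definition V_melo : nat := #|[set i : 'I_V | kind i != None]|.
Definition N_ext : nat := #|legs|.
Definition L_lines : nat := #|[set [set x; m x] | x in [set x : bvert V | m x != x]]|.

Definition col_rel : rel (bvert V) := fun x y => line x y || [exists c, gedge c x y].
Definition connected_graph : Prop := forall x y : bvert V, connect col_rel x y.

Definition ncomp (S : {set bvert V}) (r : rel (bvert V)) : nat :=
  #|[set [set y | connect r x y] | x in S]|.

Definition face_rel (c : 'I_3) : rel (bvert V) := fun x y => gedge c x y || line x y.
Definition faces (c : 'I_3) : {set {set bvert V}} :=
  [set [set y | connect (face_rel c) x y] | x : bvert V].
Definition int_faces (c : 'I_3) : {set {set bvert V}} :=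
  [set F in faces c | [forall y in F, m y != y]].
Definition F_int : nat := \sum_(c < 3) #|int_faces c|.

Definition bub_cycles (a b : 'I_3) : nat :=
  ncomp [set: bvert V] (fun x y => gedge a x y || gedge b x y).

(* boundary graph: an edge of color c joins the two (distinct) legs of an
   external face of color c *)
Definition bedge (c : 'I_3) : rel (bvert V) :=
  fun x y => [&& m x == x, m y == y, x != y & connect (face_rel c) x y].

Definition C_bnd : nat := ncomp legs (fun x y => [exists d, bedge d x y]).
Definition bnd_cycles_without (b : 'I_3) : nat :=
  ncomp legs (fun x y => [exists d, (d != b) && bedge d x y]).
Definition F_bnd : nat := \sum_(b < 3) bnd_cycles_without b.

Local Open Scope ring_scope.

(* 2 C - 2 g = N - 3/2 N + F *)
Definition g_bnd : rat :=
  (2 * (C_bnd%:R) - ((N_ext%:R) - 3%:R / 2%:R * (N_ext%:R) + (F_bnd%:R))) / 2%:R.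

(* pinched jacket whose middle color (not adjacent to 0) is b; the colors
   adjacent to 0 are the two colors a,c different from b *)
Definition F_jacket (b : 'I_3) : nat :=
  (\sum_(a < 3 | a != b) (#|int_faces a| + bub_cycles a b))%N + bnd_cycles_without b.

(* 2 - 2 g = 4V - (L + 6V) + F *)
Definition g_jacket (b : 'I_3) : rat :=
  (2%:R - ((4 * V)%:R - (L_lines + 6 * V)%:R + (F_jacket b)%:R)) / 2%:R.

Definition omega : rat := \sum_(b < 3) g_jacket b.

End Graph.

From mathcomp Require Import all_boot all_order all_algebra.
From mathcomp Require Import lra.
Set Implicit Arguments. Unset Strict Implicit. Unset Printing Implicit Defensive.
Import GRing.Theory.

(* Summing the face numbers of the three pinched jackets counts every internal
   face twice (a face of colour a lies in the two jackets where a is adjacent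
   to 0), every bicoloured boundary cycle once, and the bicoloured cycles inside
   the bubbles once per ordered pair of colours: 6 for a tetrahedral bubble
   (one 4-cycle per pair) and 8 for a melonic one.  With 2L + N_ext = 4V the
   formula becomes a linear identity. *)

Definition components (T : finType) (e : rel T) : {set {set T}} :=
  [set [set y | connect e x y] | x : T].

Lemma card_components (T : finType) (e : rel T) :
  connect_sym e -> #|components e| = n_comp e T.
Proof.
move=> sym_e.
have -> : components e = [set [set y | connect e x y] | x in roots e].
  apply/setP => A; apply/imsetP/imsetP => [[x _ ->]|[x _ ->]]; last by exists x.
  exists (fingraph.root e x); first exact: roots_root.
  by apply/setP => y; rewrite !inE (same_connect sym_e (connect_root e x)).
rewrite card_in_imset; first by apply: eq_card => x; rewrite !inE andbT.
move=> x y rx ry /setP /(_ y); rewrite !inE connect0 => /(fingraph.rootP sym_e).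
by rewrite (eqP rx) (eqP ry).
Qed.

Section Fiberwise.
Variables (I K : finType) (R : rel (I * K)) (r : I -> rel K).
Hypothesis R_fiberwise : forall x y, R x y = (x.1 == y.1) && r x.1 x.2 y.2.

Lemma connect_fiberwise i k y :
  connect R (i, k) y = (y.1 == i) && connect (r i) k y.2.
Proof.
apply/idP/andP => [/connectP[p] | [/eqP <- /connectP[p]]].
  elim: p i k => [|z p IHp] i k /=; first by move=> _ ->.
  rewrite R_fiberwise /= => /andP[/andP[/eqP iz rkz] pz].
  case: z iz rkz pz => j l /= <- rkl pl /(IHp _ _ pl)[-> ly].
  by split; last exact: connect_trans (connect1 rkl) ly.
elim: p k => [|l p IHp] k /=; first by move=> _ <-; rewrite -surjective_pairing.
case/andP=> rkl pl /(IHp _ pl); apply: connect_trans; apply: connect1.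
by rewrite R_fiberwise eqxx.
Qed.

Lemma card_components_fiberwise :
  #|components R| = \sum_i #|components (r i)|.
Proof.
pose D := [set p : I * {set K} | p.2 \in components (r p.1)].
have -> : components R = (fun p : I * {set K} => pair p.1 @: p.2) @: D.
  apply/setP => A; apply/imsetP/imsetP => [[[i k] _ ->]|[[i B] /[!inE] /imsetP[k _ ->] ->]].
    exists (i, [set l | connect (r i) k l]); first by rewrite inE /=; apply: imset_f.
    apply/setP => y; rewrite inE connect_fiberwise /=.
    apply/andP/imsetP => [[/eqP <- kl]|[l /[!inE] kl ->]]; last by rewrite eqxx.
    by exists y.2; rewrite ?inE // -surjective_pairing.
  exists (i, k) => //; apply/setP => y; rewrite inE connect_fiberwise /=.
  apply/imsetP/andP => [[l /[!inE] kl ->]|[/eqP <- kl]]; first by rewrite eqxx.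
  by exists y.2; rewrite ?inE // -surjective_pairing.
rewrite card_in_imset.
  under eq_bigr => i _ do rewrite -sum1_card.
  by rewrite pair_big_dep sum1dep_card.
move=> [i A] [j B] /[!inE] /= /imsetP[k _ ->] _ eqAB.
have /imsetP[l _ [ij _]] : (i, k) \in pair j @: B.
  by rewrite -eqAB; apply: imset_f; rewrite inE.
have inj_pair : injective (pair j : K -> I * K) by move=> l1 l2 [].
by move: eqAB; rewrite ij => /(imset_inj inj_pair) ->.
Qed.

End Fiberwise.

Definition bubble_rel (o : option 'I_3) (a b : 'I_3) : rel 'I_4 :=
  fun k l => bubble_edge o a k l || bubble_edge o b k l.

Lemma bubble_edge_sym o c : symmetric (bubble_edge o c).
Proof. by move=> k l; apply: orbC. Qed.

Lemma bubble_rel_sym o a b : connect_sym (bubble_rel o a b).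
Proof.
by apply: sym_connect_sym => k l; rewrite /bubble_rel (bubble_edge_sym o a) (bubble_edge_sym o b).
Qed.

(* The library enumeration of ['I_n] goes through the opaque [idP], so
   [vm_compute] needs this explicit form. *)
Lemma enum_ord4 : Finite.enum 'I_4 =
  [:: @Ordinal 4 0 isT; @Ordinal 4 1 isT; @Ordinal 4 2 isT; @Ordinal 4 3 isT].
Proof. by apply: (inj_map val_inj); rewrite -enumT val_enum_ord. Qed.

(* In a melonic bubble of colour c the two other colours share the doubled
   edges, hence form two 2-cycles; every other bicoloured subgraph is a 4-cycle. *)
Lemma n_comp_bubble o a b : a != b ->
  n_comp (bubble_rel o a b) 'I_4 =
    if o is Some c then (if (a == c) || (b == c) then 1 else 2) else 1.
Proof.
by case: o => [[[|[|[|c]]] Hc]|]; move: a b => [[|[|[|a]]] Ha] [[|[|[|b]]] Hb] //= _;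
  rewrite /n_comp_mem /roots /fingraph.root /connect /rgraph /pick card_ord [card]unlock /=;
  rewrite /enum_mem enum_ord4; vm_compute.
Qed.

Lemma sum_n_comp_bubble o :
  \sum_(b < 3) \sum_(a < 3 | a != b) n_comp (bubble_rel o a b) 'I_4 =
    if o is None then 6 else 8.
Proof.
under eq_bigr => b _ do under eq_bigr => a ab do rewrite n_comp_bubble //.
under eq_bigr => b _ do rewrite big_mkcond.
by case: o => [[[|[|[|c]]] Hc]|] //; rewrite !big_ord_recl !big_ord0.
Qed.

Lemma sum_ord_neq n (f : 'I_n -> nat) :
  \sum_(b < n) \sum_(a < n | a != b) f a = n.-1 * \sum_(a < n) f a.
Proof.
rewrite (exchange_big_dep predT) //= big_distrr /=; apply: eq_bigr => a _.
by rewrite (eq_bigl (predC1 a)) ?sum_nat_const ?cardC1 ?card_ord // => b; rewrite /= eq_sym.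
Qed.

Lemma card_involution (T : finType) (m : T -> T) : involutive m ->
  2 * #|[set [set x; m x] | x in [set x | m x != x]]| + #|[set x | m x == x]| = #|T|.
Proof.
move=> m_inv; set moved := [set x | m x != x]; set P := [set _ | x in moved].
have pair_of_mem x z : z \in [set x; m x] -> [set x; m x] = [set z; m z].
  by rewrite !inE => /orP[] /eqP ->; rewrite ?m_inv 1?setUC.
have partP : partition P moved.
  apply/and3P; split.
  - apply/eqP/setP => z; apply/bigcupP/idP => [[_ /imsetP[x xm ->]]|zm].
      rewrite !inE in xm *; case/orP=> /eqP -> //; by rewrite m_inv eq_sym.
    by exists [set z; m z]; [apply: imset_f | rewrite set21].
  - apply/trivIsetP => _ _ /imsetP[x _ ->] /imsetP[y _ ->] neq.
    rewrite -setI_eq0; apply/eqP/setP => z; rewrite inE in_set0; apply/negP => /andP[zx zy].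
    by move/eqP: neq; rewrite (pair_of_mem _ _ zx) (pair_of_mem _ _ zy).
  - by apply/imsetP => -[x _ /setP/(_ x)]; rewrite !inE eqxx.
rewrite -(cardsC moved) (card_partition partP) (eq_bigr (fun=> 2)).
  by rewrite sum_nat_const mulnC; congr (_ + _); apply: eq_card => x; rewrite !inE negbK.
by move=> _ /imsetP[x /[!inE] xm ->]; rewrite cards2 eq_sym xm.
Qed.

Section BubbleCycles.
Variables (V : nat) (kind : 'I_V -> option 'I_3).

Lemma bub_cycles_sum a b :
  bub_cycles kind a b = \sum_(i < V) n_comp (bubble_rel (kind i) a b) 'I_4.
Proof.
have -> : bub_cycles kind a b = #|components (fun x y => gedge kind a x y || gedge kind b x y)|.
  by rewrite /bub_cycles /ncomp; apply: eq_card => A; apply/imsetP/imsetP => -[x _ ->]; exists x.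
rewrite (card_components_fiberwise (r := fun i => bubble_rel (kind i) a b)).
  by apply: eq_bigr => i _; rewrite card_components //; apply: bubble_rel_sym.
by move=> x y; rewrite /gedge -andb_orr.
Qed.

Lemma sum_bub_cycles :
  \sum_(b < 3) \sum_(a < 3 | a != b) bub_cycles kind a b = 6 * V_plus kind + 8 * V_melo kind.
Proof.
under eq_bigr => b _ do under eq_bigr => a _ do rewrite bub_cycles_sum.
under eq_bigr => b _ do rewrite exchange_big.
rewrite exchange_big (bigID (fun i => kind i == None)) /=.
rewrite (eq_bigr (fun=> 6)) => [|i /eqP kiN]; last by rewrite sum_n_comp_bubble kiN.
rewrite [X in _ + X](eq_bigr (fun=> 8)) => [|i]; last by rewrite sum_n_comp_bubble; case: (kind i).
by rewrite !sum_nat_const /V_plus /V_melo !cardsE mulnC [8 * _]mulnC.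
Qed.

Lemma V_plus_melo : V_plus kind + V_melo kind = V.
Proof.
rewrite /V_plus /V_melo -[RHS]card_ord -(cardsC [set i | kind i == None]).
by congr (_ + _); apply: eq_card => i; rewrite !inE.
Qed.

Lemma sum_F_jacket (m : bvert V -> bvert V) :
  \sum_(b < 3) F_jacket kind m b =
    2 * F_int kind m + (6 * V_plus kind + 8 * V_melo kind) + F_bnd kind m.
Proof.
rewrite -sum_bub_cycles /F_int -(sum_ord_neq (fun a => #|int_faces kind m a|)).
rewrite /F_jacket big_split /=.
by under eq_bigr => b _ do rewrite big_split; rewrite big_split.
Qed.

End BubbleCycles.

Lemma card_lines_legs V (m : bvert V -> bvert V) : involutive m ->
  2 * L_lines m + N_ext m = 4 * V.
Proof. by move/card_involution->; rewrite card_prod !card_ord mulnC. Qed.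

Local Open Scope ring_scope.

Theorem proposition1 (V : nat) (kind : 'I_V -> option 'I_3)
    (m : bvert V -> bvert V) :
  involutive m ->
  connected_graph kind m ->
  (F_int kind m)%:R =
    - (omega kind m - g_bnd kind m) + 3%:R * (V_plus kind)%:R
    + 2%:R * (V_melo kind)%:R - (N_ext m)%:R
    - ((C_bnd kind m)%:R - 1) + 2%:R :> rat.
Proof.
move=> m_inv _.
have lines := congr1 (GRing.natmul (1 : rat)) (card_lines_legs m_inv).
have vertices := congr1 (GRing.natmul (1 : rat)) (V_plus_melo kind).
have jackets := congr1 (GRing.natmul (1 : rat)) (sum_F_jacket kind m).
move: lines vertices jackets.
rewrite /omega /g_jacket /g_bnd !big_ord_recl !big_ord0 !natrD.
lra.
Qed.
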